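(* Let $0<s_1<s_2$, $0<\epsilon<\min(s_1,s_2-s_1)$ and $M>\epsilon$ satisfy \[ \frac{2}{s_2+\epsilon}+\frac{1}{2s_2+\epsilon}+\frac{1}{2s_1+\epsilon}>\frac{\sqrt3}{s_1-\epsilon}+\frac1{s_1}+\frac1{M-\epsilon}. \] Let $(r_1,r_2,r_3)\in(0,\epsilon)\times(s_2-\epsilon,s_2)\times(s_2,s_2+\epsilon)$ and $(\ell_1,\ell_2,\ell_3)\in(s_1-\epsilon,s_1)\times(s_1,s_1+\epsilon)\times(M,\infty)$, and suppose $r_3\ge\varphi(r_1,r_2)$ and $\ell_3\ge\varphi(\ell_1,\ell_2)$. Then \[ c(r_1,r_2,r_3)+c(\ell_1,\ell_2,\ell_3)>c(\ell_1,r_2,r_3)+c(r_1,\ell_2,\ell_3). \]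
   Context: For $r_1,r_2,r_3\ge 0$ and $(\alpha,\beta)\in\mathbb T^2$ let \[C(r_1,r_2,r_3,\alpha,\beta)=\frac{1}{\sqrt{r_1^2+r_2^2-2r_1r_2\cos\alpha}}+\frac{1}{\sqrt{r_1^2+r_3^2-2r_1r_3\cos\beta}}+\frac{1}{\sqrt{r_2^2+r_3^2-2r_2r_3\cos(\alpha-\beta)}}\] (value $+\infty$ if a denominator vanishes), and let the radial cost be $c(r_1,r_2,r_3)=\min_{(\alpha,\beta)\in\mathbb T^2}C(r_1,r_2,r_3,\alpha,\beta)$. For $0<r_1<r_2$, $\varphi(r_1,r_2)=\dfrac{5r_1r_2+r_2^2+(r_1+r_2)\sqrt{r_2^2+12r_1r_2-4r_1^2}}{2(r_2-r_1)}$; the condition $r_3\ge\varphi(r_1,r_2)$ (for $r_3>0$) is equivalent to $r_2(r_3-r_1)^3-r_1(r_3+r_2)^3-r_3(r_1+r_2)^3\ge0$. *)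

From HB Require Import structures.
From mathcomp Require Import all_boot all_order all_algebra.
From mathcomp Require Import all_classical all_reals all_analysis.
Set Implicit Arguments. Unset Strict Implicit. Unset Printing Implicit Defensive.
Import Order.TTheory GRing.Theory Num.Theory.
Local Open Scope classical_set_scope.
Local Open Scope ring_scope.

Definition pairterm {R : realType} (a b t : R) : \bar R :=
  let d := Num.sqrt (a ^+ 2 + b ^+ 2 - 2 * a * b * cos t) in
  if d == 0 then +oo%E else (d^-1)%:E.

(* C(r1,r2,r3,alpha,beta); angles taken in R (all terms are 2pi-periodic,
   so this is a function on the torus T^2 = (R/2piZ)^2). *)
Definition Ccost {R : realType} (r1 r2 r3 alpha beta : R) : \bar R :=
  (pairterm r1 r2 alpha + pairterm r1 r3 beta + pairterm r2 r3 (alpha - beta))%E.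

(* radial cost c(r1,r2,r3) = min over the torus of C (as an infimum in \bar R;
   the minimum is attained) *)
Definition ccost {R : realType} (r1 r2 r3 : R) : \bar R :=
  ereal_inf [set Ccost r1 r2 r3 ab.1 ab.2 | ab in [set: R * R]].

Definition phi {R : realType} (r1 r2 : R) : R :=
  (5 * r1 * r2 + r2 ^+ 2 + (r1 + r2) * Num.sqrt (r2 ^+ 2 + 12 * r1 * r2 - 4 * r1 ^+ 2))
  / (2 * (r2 - r1)).

From HB Require Import structures.
From mathcomp Require Import all_boot all_order all_algebra.
From mathcomp Require Import all_classical all_reals all_analysis.
From mathcomp Require Import ring lra.
Import Order.TTheory GRing.Theory Num.Theory.
Local Open Scope ring_scope.

(* The radial cost c is an infimum over the torus, so it is
   bounded above by its value at any explicit pair of angles and below by any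
   uniform lower bound on C.  We bound the four costs separately:
   - c(l1,r2,r3) <= sqrt 3/(s1-eps): the three points at mutual angles 2pi/3
     are at distance >= sqrt 3 (s1-eps) from one another;
   - c(r1,l2,l3) <= 1/(r1+l2) + 1/(l3-r1) + 1/(l2+l3): a collinear placement;
   - c(l1,l2,l3) >= 1/(l1+l2) + 1/(l1+l3) + 1/(l2+l3) by the triangle
     inequality;
   - c(r1,r2,r3) >= 2/(s2+eps) + 1/(2 s2+eps): r1 is tiny and r2, r3 are
     close to s2; either the points at r2, r3 are far apart, or both are at
     distance about s2 from the point at r1 (a polynomial inequality, valid
     once 16 eps < s2, which the hypothesis on s1, s2, eps, M forces). *)

Lemma inv_le_pos {R : numFieldType} {a b : R} : 0 < a -> a <= b -> b^-1 <= a^-1.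
Proof. by move=> a0 ab; rewrite lef_pV2 ?posrE // (lt_le_trans a0 ab). Qed.

Lemma inv_sum4 {R : realFieldType} {x y : R} : 0 < x -> 0 < y ->
  4 / (x + y) <= x^-1 + y^-1.
Proof.
move=> x0 y0; rewrite -subr_ge0.
have -> : x^-1 + y^-1 - 4 / (x + y) = (x - y)^+2 / (x * y * (x + y)).
  have nx : x != 0 by rewrite gt_eqF.
  have ny : y != 0 by rewrite gt_eqF.
  have nxy : x + y != 0 by rewrite gt_eqF // addr_gt0.
  by field; rewrite nx ny nxy.
by apply: divr_ge0; [exact: sqr_ge0 | apply: mulr_ge0; [apply: mulr_ge0|]; lra].
Qed.

Lemma cosine_law_le {R : realFieldType} {a b c x : R} :
  0 <= a -> 0 <= b -> -1 <= c -> 0 <= x ->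
  x^+2 = a^+2 + b^+2 - 2 * a * b * c -> x <= a + b.
Proof.
move=> a0 b0 c1 x0 hx.
have abc : 0 <= a * b * (c + 1) by apply: mulr_ge0; [apply: mulr_ge0|]; lra.
have : x^+2 <= (a + b)^+2 by rewrite hx; nra.
by rewrite ler_pXn2r // nnegrE; lra.
Qed.

(* The polynomial inequality behind the second case of the lower bound on
   c(r1,r2,r3); substituting s = 16 e + d makes every coefficient of the
   difference, a form in e and d, nonnegative. *)
Lemma near_collinear_poly {R : realFieldType} (s e : R) : 0 < e -> 16 * e < s ->
  (s^+2 + 5*s*e + 3*e^+2)^+2 * (3*s^+2 + 5*s*e + 7/4*e^+2) <=
  ((s+e)*(2*s+e)*(s+2*e))^+2.
Proof.
move=> e0 hs; set d := s - 16 * e.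
have d0 : 0 <= d by rewrite /d; lra.
have -> : s = 16 * e + d by rewrite /d; ring.
have mono (k : nat) : 0 <= e^+k * d^+(6 - k).
  by apply: mulr_ge0; apply: exprn_ge0 => //; lra.
have := mono 0%N; have := mono 1%N; have := mono 2%N; have := mono 3%N.
have := mono 4%N; have := mono 5%N; have := mono 6%N; rewrite /= => *; lra.
Qed.

Lemma cos_diff_geN1 {R : realFieldType} {ca sa cb sb : R} :
  ca^+2 + sa^+2 = 1 -> cb^+2 + sb^+2 = 1 -> -1 <= ca * cb + sa * sb.
Proof.
move=> hca hcb.
have hwq : (ca * cb + sa * sb)^+2 + (ca * sb - sa * cb)^+2 = 1.
  by rewrite -[1]mulr1 -{1}hca -hcb; ring.
have := sqr_ge0 (ca * sb - sa * cb); nra.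
Qed.

(* In the lower bound for c(r1,r2,r3), x, y, z are the mutual distances of
   points at radii r1 < e and r2, r3 near s; the second and third points
   make angles of cosines ca, cb with the first one.  First case: the
   points at r2 and r3 are not nearly opposite (r2 ca + r3 cb is not very
   negative), so the point at r1 is close to both of them. *)
Lemma near_collinear_case_close {R : realFieldType} {s e r1 r2 r3 ca cb x y : R} :
  0 < e -> e < s -> 0 < r1 < e -> 0 < r2 < s -> 0 < r3 < s + e ->
  0 < x -> 0 < y ->
  x^+2 = r1^+2 + r2^+2 - 2 * r1 * r2 * ca ->
  y^+2 = r1^+2 + r3^+2 - 2 * r1 * r3 * cb ->
  - (s - e / 2) <= r2 * ca + r3 * cb ->
  2 * (s + e)^-1 <= x^-1 + y^-1.
Proof.
move=> e0 es /andP[r10 r1e] /andP[r20 r2u] /andP[r30 r3u] x0 y0 hx hy hu.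
have hxy : x + y <= 2 * (s + e).
  have r1u : 0 <= r1 * (r2 * ca + r3 * cb + (s - e / 2)) by nra.
  have r12 : r1^+2 <= e^+2 by apply: lerXn2r; rewrite ?nnegrE; lra.
  have r22 : r2^+2 <= s^+2 by apply: lerXn2r; rewrite ?nnegrE; lra.
  have r32 : r3^+2 <= (s + e)^+2 by apply: lerXn2r; rewrite ?nnegrE; lra.
  have sxy : x^+2 + y^+2 <= 2 * (s + e)^+2 by rewrite hx hy; nra.
  have : (x + y)^+2 <= (2 * (s + e))^+2 by have := sqr_ge0 (x - y); nra.
  by rewrite ler_pXn2r // nnegrE; lra.
have h4 : 4 / (2 * (s + e)) <= 4 / (x + y).
  by rewrite ler_pM2l // inv_le_pos //; lra.
have -> : 2 * (s + e)^-1 = 4 / (2 * (s + e)).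
  by field; rewrite gt_eqF //; lra.
have := inv_sum4 x0 y0; lra.
Qed.

(* Second case: the points at r2 and r3 are nearly opposite, hence their
   distance z is at most about sqrt 3 s. *)
Lemma near_collinear_far_sq {R : realFieldType} {s e r2 r3 ca sa cb sb z : R} :
  0 < e -> e < s -> s - e < r2 < s -> s < r3 < s + e ->
  ca^+2 + sa^+2 = 1 -> cb^+2 + sb^+2 = 1 ->
  z^+2 = r2^+2 + r3^+2 - 2 * r2 * r3 * (ca * cb + sa * sb) ->
  r2 * ca + r3 * cb < - (s - e / 2) ->
  z^+2 <= 3 * s^+2 + 5 * s * e + 7/4 * e^+2.
Proof.
move=> e0 es /andP[r2l r2u] /andP[r3l r3u] hca hcb hz hu.
have iden : z^+2 = 2 * (r2^+2 + r3^+2) - (r2 * ca + r3 * cb)^+2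
                   - (r2 * sa + r3 * sb)^+2.
  apply/eqP; rewrite -subr_eq0; apply/eqP.
  have -> : z^+2 - (2 * (r2^+2 + r3^+2) - (r2 * ca + r3 * cb)^+2
                    - (r2 * sa + r3 * sb)^+2)
      = r2^+2 * (ca^+2 + sa^+2 - 1) + r3^+2 * (cb^+2 + sb^+2 - 1).
    by rewrite hz; ring.
  by rewrite hca hcb !subrr !mulr0 addr0.
have u2 : (s - e/2)^+2 <= (r2 * ca + r3 * cb)^+2.
  by rewrite -[X in _ <= X]sqrrN; apply: lerXn2r; rewrite ?nnegrE; lra.
have r22 : r2^+2 <= s^+2 by apply: lerXn2r; rewrite ?nnegrE; lra.
have r32 : r3^+2 <= (s + e)^+2 by apply: lerXn2r; rewrite ?nnegrE; lra.
have := sqr_ge0 (r2 * sa + r3 * sb); rewrite iden; lra.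
Qed.

(* In the second case the bound on z leaves exactly the room needed: since
   1/x >= 1/(s+e) and 1/y >= 1/(s+2e), it suffices that 1/z is at least
   g = 2/(s+e) + 1/(2s+e) - 1/(s+e) - 1/(s+2e). *)
Lemma near_collinear_far_inv {R : realFieldType} {s e z : R} :
  0 < e -> 16 * e < s -> 0 < z ->
  z^+2 <= 3 * s^+2 + 5 * s * e + 7/4 * e^+2 ->
  2 * (s + e)^-1 + (2 * s + e)^-1 - (s + e)^-1 - (s + 2 * e)^-1 <= z^-1.
Proof.
move=> e0 es z0 hz.
set g := (s^+2 + 5*s*e + 3*e^+2) / ((s+e)*(2*s+e)*(s+2*e)).
have -> : 2 * (s + e)^-1 + (2 * s + e)^-1 - (s + e)^-1 - (s + 2 * e)^-1 = g.
  by rewrite /g; field; rewrite !gt_eqF //; lra.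
have den0 : 0 < (s+e)*(2*s+e)*(s+2*e).
  by apply: mulr_gt0; [apply: mulr_gt0|]; lra.
have g0 : 0 <= g by apply: divr_ge0; [nra | lra].
have gz2 : (g * z)^+2 <= 1.
  rewrite exprMn; apply: (le_trans (y := g^+2 * (3*s^+2 + 5*s*e + 7/4*e^+2))).
    by apply: ler_wpM2l => //; exact: sqr_ge0.
  rewrite /g expr_div_n mulrAC ler_pdivrMr ?mul1r ?exprn_gt0 //.
  exact: near_collinear_poly.
have gz0 : 0 <= g * z by apply: mulr_ge0 => //; lra.
by rewrite -div1r ler_pdivlMr //; nra.
Qed.

Lemma near_collinear_lb {R : realFieldType} {s e r1 r2 r3 ca sa cb sb x y z : R} :
  0 < e -> 16 * e < s -> 0 < r1 < e -> s - e < r2 < s -> s < r3 < s + e ->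
  ca^+2 + sa^+2 = 1 -> cb^+2 + sb^+2 = 1 -> 0 < x -> 0 < y -> 0 < z ->
  x^+2 = r1^+2 + r2^+2 - 2 * r1 * r2 * ca ->
  y^+2 = r1^+2 + r3^+2 - 2 * r1 * r3 * cb ->
  z^+2 = r2^+2 + r3^+2 - 2 * r2 * r3 * (ca * cb + sa * sb) ->
  2 * (s + e)^-1 + (2 * s + e)^-1 <= x^-1 + y^-1 + z^-1.
Proof.
move=> e0 es hr1 hr2 hr3 hca hcb x0 y0 z0 hx hy hz.
move: (hr1) (hr2) (hr3) => /andP[r10 r1e] /andP[r2l r2u] /andP[r3l r3u].
have ca1 : -1 <= ca by nra.
have cb1 : -1 <= cb by nra.
have xb : x <= r1 + r2 by apply: cosine_law_le hx; lra.
have yb : y <= r1 + r3 by apply: cosine_law_le hy; lra.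
have zb : z <= r2 + r3.
  by apply: cosine_law_le hz; rewrite ?cos_diff_geN1 //; lra.
have es' : e < s by lra.
case: (lerP (- (s - e / 2)) (r2 * ca + r3 * cb)) => hu.
- have iz : (2 * s + e)^-1 <= z^-1 by apply: inv_le_pos; lra.
  have hr2' : 0 < r2 < s by rewrite r2u andbT; lra.
  have hr3' : 0 < r3 < s + e by rewrite r3u andbT; lra.
  have := near_collinear_case_close e0 es' hr1 hr2' hr3' x0 y0 hx hy hu.
  lra.
- have := near_collinear_far_inv e0 es z0
    (near_collinear_far_sq e0 es' hr2 hr3 hca hcb hz hu).
  have ix : (s + e)^-1 <= x^-1 by apply: inv_le_pos; lra.
  have iy : (s + 2 * e)^-1 <= y^-1 by apply: inv_le_pos; lra.
  lra.
Qed.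

Lemma pairterm_dist {R : realType} (a b t c : R) :
  a^+2 + b^+2 - 2 * a * b * cos t = c^+2 -> 0 < c ->
  pairterm a b t = (c^-1)%:E.
Proof. by move=> h c0; rewrite /pairterm /= h sqrtr_sqr gtr0_norm // gt_eqF. Qed.

Lemma pairterm_finite {R : realType} (a b t : R) : 0 <= a * b -> a != b ->
  let d := Num.sqrt (a^+2 + b^+2 - 2 * a * b * cos t) in
  [/\ pairterm a b t = (d^-1)%:E, 0 < d & d^+2 = a^+2 + b^+2 - 2 * a * b * cos t].
Proof.
move=> ab0 ab d.
have d2 : 0 < a^+2 + b^+2 - 2 * a * b * cos t.
  have := cos_le1 t; have : 0 < (a - b)^+2 by rewrite exprn_even_gt0 // subr_eq0.
  nra.
have d0 : 0 < d by rewrite sqrtr_gt0.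
by split => //; [rewrite /pairterm /= -/d gt_eqF | rewrite sqr_sqrtr // ltW].
Qed.

(* Triangle inequality: the distance of points at radii a, b is <= a + b. *)
Lemma pairterm_ge_inv_sum {R : realType} (a b t : R) :
  0 <= a -> 0 <= b -> 0 < a + b -> (((a + b)^-1)%:E <= pairterm a b t)%E.
Proof.
move=> a0 b0 ab0; rewrite /pairterm /=; case: ifP => [_|/negbT hd].
  exact: leey.
have d0 : 0 < Num.sqrt (a^+2 + b^+2 - 2 * a * b * cos t).
  by rewrite lt_neqAle eq_sym hd sqrtr_ge0.
rewrite lee_fin inv_le_pos // -(ger0_norm (ltW ab0)) -sqrtr_sqr ler_sqrt;
  last exact: sqr_ge0.
have := cos_geN1 t; have : 0 <= a * b by apply: mulr_ge0.
nra.
Qed.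

Lemma pairterm_le_third_turn {R : realType} (a b t m : R) :
  0 < m -> m <= a -> m <= b -> cos t = -1/2 ->
  (pairterm a b t <= ((Num.sqrt 3 * m)^-1)%:E)%E.
Proof.
move=> m0 ma mb ct.
have e0 : 3 * m^+2 <= a^+2 + b^+2 - 2 * a * b * cos t by rewrite ct; nra.
have p0 : 0 < 3 * m^+2 by apply: mulr_gt0 => //; apply: exprn_gt0.
have hs : Num.sqrt 3 * m = Num.sqrt (3 * m^+2).
  by rewrite sqrtrM // sqrtr_sqr gtr0_norm.
have x0 : 0 < Num.sqrt (a^+2 + b^+2 - 2 * a * b * cos t).
  by rewrite sqrtr_gt0; apply: lt_le_trans p0 e0.
rewrite /pairterm /= gt_eqF // lee_fin lef_pV2 ?posrE ?hs ?sqrtr_gt0 //.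
  by rewrite ler_sqrt //; apply: le_trans (ltW p0) e0.
exact: lt_le_trans p0 e0.
Qed.

Lemma ccost_le_Ccost {R : realType} (a b c alpha beta : R) :
  (ccost a b c <= Ccost a b c alpha beta)%E.
Proof. by apply: ereal_inf_lbound; exists (alpha, beta). Qed.

Lemma ccost_ge_inv_sums {R : realType} (a b c : R) : 0 < a -> 0 < b -> 0 < c ->
  (((a + b)^-1 + (a + c)^-1 + (b + c)^-1)%:E <= ccost a b c)%E.
Proof.
move=> a0 b0 c0; apply: le_ereal_inf_tmp => _ [[al be] _ <-] /=.
by rewrite /Ccost !EFinD; apply: leeD; [apply: leeD|];
  apply: pairterm_ge_inv_sum; lra.
Qed.

(* Upper bound from the configuration with angles 2pi/3 between any two
   points: three pair terms, each at most 1/(sqrt 3 m). *)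
Lemma ccost_le_third_turns {R : realType} (a b c m : R) :
  0 < m -> m <= a -> m <= b -> m <= c ->
  (ccost a b c <= (Num.sqrt 3 / m)%:E)%E.
Proof.
move=> m0 ma mb mc.
set al := acos (-1/2 : R).
have [_ ca] : 0 <= al <= pi /\ cos al = -1/2.
  by apply: acos_def; apply/andP; split; lra.
have c2al : cos (al - - al) = -1/2.
  by rewrite cosB cosN sinN mulrN -!expr2 sin2cos2 ca; lra.
apply: le_trans (ccost_le_Ccost _ _ _ al (- al)) _.
have -> : Num.sqrt 3 / m = (Num.sqrt 3 * m)^-1 *+ 3.
  have s3 : Num.sqrt 3 != 0 :> R by rewrite sqrtr_eq0 -ltNge.
  have -> : Num.sqrt 3 / m = Num.sqrt 3 ^+ 2 / (Num.sqrt 3 * m).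
    by field; rewrite s3 gt_eqF.
  by rewrite sqr_sqrtr // mulr_natl.
rewrite /Ccost mulrS mulr2n !EFinD addrA.
by apply: leeD; [apply: leeD|]; apply: pairterm_le_third_turn; rewrite ?cosN.
Qed.

(* Upper bound from the collinear configuration in which a and c are on
   one side of the origin and b on the other. *)
Lemma ccost_le_collinear {R : realType} (a b c : R) : 0 < a < c -> 0 < b ->
  (ccost a b c <= ((a + b)^-1 + (c - a)^-1 + (b + c)^-1)%:E)%E.
Proof.
move=> /andP[a0 ac] b0.
apply: le_trans (ccost_le_Ccost _ _ _ pi 0) _.
rewrite /Ccost subr0 (@pairterm_dist _ a b pi (a + b)) ?cospi; [|ring|lra].
rewrite (@pairterm_dist _ a c 0 (c - a)) ?cos0; [|ring|lra].
by rewrite (@pairterm_dist _ b c pi (b + c)) ?cospi; [rewrite -!EFinD|ring|lra].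
Qed.

Lemma ccost_ge_near_collinear {R : realType} {s e r1 r2 r3 : R} :
  0 < e -> 16 * e < s -> 0 < r1 < e -> s - e < r2 < s -> s < r3 < s + e ->
  ((2 * (s + e)^-1 + (2 * s + e)^-1)%:E <= ccost r1 r2 r3)%E.
Proof.
move=> e0 es hr1 hr2 hr3.
move: (hr1) (hr2) (hr3) => /andP[r10 r1e] /andP[r2l r2u] /andP[r3l r3u].
apply: le_ereal_inf_tmp => _ [[al be] _ <-] /=.
have r20 : 0 < r2 by lra.
have r30 : 0 < r3 by lra.
have [p1 x0 hx] := pairterm_finite _ _ al (ltW (mulr_gt0 r10 r20))
  (negbT (lt_eqF (ltac:(lra) : r1 < r2))).
have [p2 y0 hy] := pairterm_finite _ _ be (ltW (mulr_gt0 r10 r30))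
  (negbT (lt_eqF (ltac:(lra) : r1 < r3))).
have [p3 z0 hz] := pairterm_finite _ _ (al - be) (ltW (mulr_gt0 r20 r30))
  (negbT (lt_eqF (ltac:(lra) : r2 < r3))).
rewrite /Ccost p1 p2 p3 -!EFinD lee_fin; rewrite cosB in hz z0 *.
have ha : cos al ^+ 2 + sin al ^+ 2 = 1 by rewrite addrC sin2cos2 subrK.
have hb : cos be ^+ 2 + sin be ^+ 2 = 1 by rewrite addrC sin2cos2 subrK.
exact: near_collinear_lb e0 es hr1 hr2 hr3 ha hb x0 y0 z0 hx hy hz.
Qed.

(* The hypothesis of the theorem forces eps to be small compared with s2:
   otherwise its right-hand side, at least sqrt 3/(s1-eps) > 1.73 (8/7)/s2,
   exceeds its left-hand side, at most 2/s2 + 1/(2 s2) + 1/(2 s1). *)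
Lemma eps_small {R : rcfType} {s1 s2 eps M : R} :
  0 < s1 -> 0 < eps -> eps < s1 -> eps < s2 - s1 -> eps < M ->
  2 / (s2 + eps) + 1 / (2 * s2 + eps) + 1 / (2 * s1 + eps) >
    Num.sqrt 3 / (s1 - eps) + 1 / s1 + 1 / (M - eps) ->
  16 * eps < s2.
Proof.
move=> s10 e0 es1 es2 eM H; rewrite !div1r in H.
rewrite ltNge; apply/negP => hle.
have k173 : 173/100 <= Num.sqrt 3 :> R.
  by rewrite -(ler_pXn2r (_ : 0 < 2)%N) ?nnegrE ?sqrtr_ge0 // sqr_sqrtr //; lra.
have s2i : 0 < s2^-1 by rewrite invr_gt0; lra.
have i1 : (s2 + eps)^-1 <= s2^-1 by apply: inv_le_pos; lra.
have i2 : (2 * s2 + eps)^-1 <= 2^-1 * s2^-1 by rewrite -invfM; apply: inv_le_pos; lra.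
have i3 : (2 * s1 + eps)^-1 <= 2^-1 * s1^-1 by rewrite -invfM; apply: inv_le_pos; lra.
have i4 : 0 <= (M - eps)^-1 by rewrite invr_ge0; lra.
have i5 : (7/8 * s2)^-1 <= (s1 - eps)^-1 by apply: inv_le_pos; lra.
have i6 : (15/16 * s2)^-1 <= s1^-1 by apply: inv_le_pos; lra.
rewrite invfM invf_div in i5; rewrite invfM invf_div in i6.
have : 173/100 * (8/7 * s2^-1) <= Num.sqrt 3 * (s1 - eps)^-1.
  by apply: ler_pM => //; lra.
lra.
Qed.

Theorem lemma3p3 (R : realType) (s1 s2 eps M r1 r2 r3 l1 l2 l3 : R) :
  0 < s1 -> s1 < s2 ->
  0 < eps -> eps < Num.min s1 (s2 - s1) ->
  eps < M ->
  2 / (s2 + eps) + 1 / (2 * s2 + eps) + 1 / (2 * s1 + eps) >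
    Num.sqrt 3 / (s1 - eps) + 1 / s1 + 1 / (M - eps) ->
  0 < r1 < eps -> s2 - eps < r2 < s2 -> s2 < r3 < s2 + eps ->
  s1 - eps < l1 < s1 -> s1 < l2 < s1 + eps -> M < l3 ->
  r3 >= phi r1 r2 -> l3 >= phi l1 l2 ->
  (ccost r1 r2 r3 + ccost l1 l2 l3 > ccost l1 r2 r3 + ccost r1 l2 l3)%E.
Proof.
move=> s10 s12 e0; rewrite lt_min => /andP[es1 es2] eM H hr1 hr2 hr3.
move=> /andP[l1l l1u] /andP[l2l l2u] l3M _ _.
move: (hr1) (hr2) (hr3) => /andP[r10 r1e] /andP[r2l r2u] /andP[r3l r3u].
have LA := ccost_ge_near_collinear e0 (eps_small s10 e0 es1 es2 eM H) hr1 hr2 hr3.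
have LB := @ccost_ge_inv_sums _ l1 l2 l3 ltac:(lra) ltac:(lra) ltac:(lra).
have UC := @ccost_le_third_turns _ l1 r2 r3 (s1 - eps)
  ltac:(lra) ltac:(lra) ltac:(lra) ltac:(lra).
have UD := @ccost_le_collinear _ r1 l2 l3 ltac:(apply/andP; lra) ltac:(lra).
apply: le_lt_trans (leeD UC UD) _; apply: lt_le_trans (leeD LA LB).
rewrite -!EFinD lte_fin; rewrite !div1r in H.
have f1 : (2 * s1 + eps)^-1 < (l1 + l2)^-1 by rewrite ltf_pV2 ?posrE; lra.
have f2 : 0 <= (l1 + l3)^-1 by rewrite invr_ge0; lra.
have f3 : (r1 + l2)^-1 < s1^-1 by rewrite ltf_pV2 ?posrE; lra.
have f4 : (l3 - r1)^-1 < (M - eps)^-1 by rewrite ltf_pV2 ?posrE; lra.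
lra.
Qed.
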